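(* Let $\mathcal M=(S,A,P)$ be an MDP, $T\subseteq S$ a set of sink target states, $\mathcal M'$ the pruned MDP and $s_0\in S'$. For every strategy $\sigma\in\Sigma_{\mathcal M,s_0}(\Diamond T)$, $$\mathbb E'_{\sigma,s_0}(\mathrm{len}_T)=\mathbb E_{\sigma,s_0}(\mathrm{len}_T\mid\Diamond T).$$
   Context: An MDP is $\mathcal M=(S,A,P)$ with $S,A$ finite and $P$ a partial map $S\times A\to\mathrm{Dist}(S)$; $a$ is legal at $s$ if $P(s,a)$ is defined; $P(s,a,s')=P(s,a)(s')$. A strategy maps finite paths to distributions over legal actions at the last state (history-dependent, randomized). $\Pr_{\sigma,s}$, $\mathbb E_{\sigma,s}$ are the induced probability measure and expectation on infinite paths from $s$. States of $T$ are sinks; $\Diamond T$ is the event of visiting $T$; $\mathrm{Val}(s)=\max_\sigma\Pr_{\sigma,s}(\Diamond T)$; $\Sigma_{\mathcal M,s}(\Diamond T)$ is the set of strategies with $\Pr_{\sigma,s}(\Diamond T)=\mathrm{Val}(s)$. For an infinite path $\rho$, $\mathrm{len}_T(\rho)$ is the least $i$ with $\rho[i]\in T$ (the $(i+1)$-th state). $\mathbb E_{\sigma,s}(\mathrm{len}_T\mid\Diamond T)=\sum_{r\ge0}r\cdot\Pr_{\sigma,s}(\Diamond T\wedge \mathrm{len}_T=r)/\Pr_{\sigma,s}(\Diamond T)$. $\mathrm{Opt}_{\mathcal M}=\{(s,a): a\text{ legal at }s,\ \mathrm{Val}(s)=\sum_{s'}P(s,a,s')\mathrm{Val}(s')\}$;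 $\Sigma^{\mathrm{Opt}}_{\mathcal M}$ is the set of strategies that, after every finite path $\rho$, only give positive probability to actions $a$ with $(\mathrm{last}(\rho),a)\in\mathrm{Opt}_{\mathcal M}$; every strategy in $\Sigma_{\mathcal M,s}(\Diamond T)$ lies in $\Sigma^{\mathrm{Opt}}_{\mathcal M}$. The pruned MDP $\mathcal M'=(S',A,P')$ has $S'=\{s:\mathrm{Val}(s)>0\}$ and $P'(s,a,s')=P(s,a,s')\mathrm{Val}(s')/\mathrm{Val}(s)$ if $s\in S'$ and $(s,a)\in\mathrm{Opt}_{\mathcal M}$ (undefined otherwise). Strategies in $\Sigma^{\mathrm{Opt}}_{\mathcal M}$ are identified with strategies of $\mathcal M'$ by restriction to finite paths of $\mathcal M'$; $\mathbb E'_{\sigma,s}$ is the expectation in $\mathcal M'$. *)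

From HB Require Import structures.
From mathcomp Require Import all_boot all_order all_algebra.
From mathcomp Require Import all_classical all_reals all_analysis.
Set Implicit Arguments. Unset Strict Implicit. Unset Printing Implicit Defensive.
Import Order.TTheory GRing.Theory Num.Theory.
Local Open Scope ring_scope.

Section MDP.
Variables (R : realType) (S A : finType).

(* An MDP (S, A, P): [legal s a] says P(s,a) is defined; then P s a is a
   distribution on S.  Values of P s a for illegal a are irrelevant. *)
Definition is_dist (f : S -> R) : Prop :=
  (forall s, 0 <= f s) /\ \sum_(s : S) f s = 1.

Definition is_mdp (legal : S -> A -> bool) (P : S -> A -> S -> R) : Prop :=
  forall s a, legal s a -> is_dist (P s a).

(* A finite path s0 a0 s1 ... an-1 sn is (s0, [:: (a0,s1); ...; (an-1,sn)]). *)
Definition last_state (s0 : S) (h : seq (A * S)) : S := last s0 (map snd h).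

Definition strat := S -> seq (A * S) -> A -> R.

Definition is_strategy (legal : S -> A -> bool) (sigma : strat) : Prop :=
  forall s0 h, [/\ (forall a, 0 <= sigma s0 h a),
                   \sum_(a : A) sigma s0 h a = 1 &
                   (forall a, 0 < sigma s0 h a -> legal (last_state s0 h) a)].

(* Probability of the cylinder of the finite path (s0, h ++ rest) given that
   the prefix h has already been performed: product of
   sigma(prefix)(a) * P(last, a, s'). *)
Fixpoint pprob (P : S -> A -> S -> R) (sigma : strat) (s0 : S)
  (h rest : seq (A * S)) : R :=
  match rest with
  | [::] => 1
  | (a, s') :: rest' =>
      sigma s0 h a * P (last_state s0 h) a s' *
      pprob P sigma s0 (rcons h (a, s')) rest'
  end.

Definition first_hit (T : {set S}) (s0 : S) (w : seq (A * S)) : bool :=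
  (last_state s0 w \in T) && all (fun x => x \notin T) (belast s0 (map snd w)).

(* Pr_{sigma,s0}(<>T /\ len_T = r) *)
Definition pr_len (P : S -> A -> S -> R) (T : {set S}) (sigma : strat)
  (s0 : S) (r : nat) : R :=
  \sum_(w : r.-tuple (A * S) | first_hit T s0 w) pprob P sigma s0 [::] w.

Definition pr_reach (P : S -> A -> S -> R) (T : {set S}) (sigma : strat)
  (s0 : S) : \bar R :=
  (\sum_(0 <= r <oo) (pr_len P T sigma s0 r)%:E)%E.

Definition ValE (legal : S -> A -> bool) (P : S -> A -> S -> R)
  (T : {set S}) (s : S) : \bar R :=
  ereal_sup [set pr_reach P T sigma s | sigma in [set sigma | is_strategy legal sigma]].

Definition Val (legal : S -> A -> bool) (P : S -> A -> S -> R) (T : {set S}) (s : S) : R := fine (ValE legal P T s).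

Definition optimal (legal : S -> A -> bool) (P : S -> A -> S -> R) (T : {set S}) (sigma : strat) (s : S) : Prop :=
  is_strategy legal sigma /\ pr_reach P T sigma s = ValE legal P T s.

Definition Opt (legal : S -> A -> bool) (P : S -> A -> S -> R) (T : {set S}) (s : S) (a : A) : Prop :=
  legal s a /\ Val legal P T s = \sum_(s' : S) P s a s' * Val legal P T s'.

(* Pruned MDP M': transition probabilities P' (0 where undefined); states
   outside S' = {s | Val s > 0} have no legal action in M'. *)
Definition legal' (legal : S -> A -> bool) (P : S -> A -> S -> R) (T : {set S}) (s : S) (a : A) : bool :=
  (0 < Val legal P T s) && `[< Opt legal P T s a >].

Definition P' (legal : S -> A -> bool) (P : S -> A -> S -> R) (T : {set S}) (s : S) (a : A) (s' : S) : R :=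
  if legal' legal P T s a
  then P s a s' * Val legal P T s' / Val legal P T s else 0.

(* E'_{sigma,s0}(len_T) in M': len_T = +oo on paths not reaching T. *)
Definition exp_len' (legal : S -> A -> bool) (P : S -> A -> S -> R) (T : {set S}) (sigma : strat) (s0 : S) : \bar R :=
  ((\sum_(0 <= r <oo) (r%:R * pr_len (P' legal P T) T sigma s0 r)%:E)
   + (if (pr_reach (P' legal P T) T sigma s0 < 1)%E then +oo else 0))%E.

Definition exp_len_cond (P : S -> A -> S -> R) (T : {set S}) (sigma : strat) (s0 : S) : \bar R :=
  ((\sum_(0 <= r <oo) (r%:R * pr_len P T sigma s0 r)%:E)
   * ((fine (pr_reach P T sigma s0))^-1)%:E)%E.

End MDP.

From HB Require Import structures.
From mathcomp Require Import all_boot all_order all_algebra.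
From mathcomp Require Import all_classical all_reals all_analysis.
From mathcomp Require Import ring.
Set Implicit Arguments. Unset Strict Implicit. Unset Printing Implicit Defensive.
Import Order.TTheory GRing.Theory Num.Theory.
Local Open Scope ring_scope.

(* Let sigma be optimal from s0 and v = Val s0 > 0.  Call a history h
   "tight" when the probability of reaching T from h under sigma equals
   Val (last h).  The empty history is tight by optimality, and a
   one-step Bellman argument (Val s >= sum_s' P(s,a,s') Val s' for every
   legal a, with equality forced along tight histories) shows that every
   action sigma plays with positive probability after a tight history
   lies in Opt, and every positive-probability successor is again tight.
   Multiplying the pruned probabilities P(s,a,s') Val s' / Val s along a
   path that first hits T (where Val = 1) then telescopes to
   Pr'(path) = Pr(path) / v.  Hence Pr'(len_T = r) = Pr(<>T /\ len_T = r) / v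
   for every r, the pruned MDP reaches T almost surely, and both
   expectations are the same series scaled by 1/v. *)

Lemma sum_tuple_cons (R : nmodType) (X : finType) (r : nat) (F : seq X -> R) :
  \sum_(w : r.+1.-tuple X) F w = \sum_(x : X) \sum_(w : r.-tuple X) F (x :: w).
Proof.
rewrite pair_big /= (reindex (fun p : X * r.-tuple X => cons_tuple p.1 p.2)) //=.
exists (fun w : r.+1.-tuple X => (thead w, behead_tuple w)).
  by case=> x t _ /=; congr pair; apply/val_inj.
by move=> w _; apply/val_inj; case: w => -[|y l].
Qed.

Lemma sum_le_eq (R : numDomainType) (I : finType) (f g : I -> R) :
  (forall i, f i <= g i) -> \sum_i f i = \sum_i g i -> forall i, f i = g i.
Proof.
move=> fg eq_sum i.
have gap0 : \sum_i (g i - f i) = 0 by rewrite sumrB eq_sum subrr.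
have gap_ge0 : forall j, true -> 0 <= g j - f j by move=> j _; rewrite subr_ge0.
by have /eqP := psumr_eq0P gap_ge0 gap0 (i := i) isT; rewrite subr_eq0 => /eqP.
Qed.

Section Paths.
Variables (S A : finType) (T : {set S}).

Lemma last_state_rcons (x : S) (h : seq (A * S)) a s :
  last_state x (rcons h (a, s)) = s.
Proof. by rewrite /last_state map_rcons last_rcons. Qed.

Lemma last_state_cat (x : S) (h h' : seq (A * S)) :
  last_state x (h ++ h') = last_state (last_state x h) h'.
Proof. by rewrite /last_state map_cat last_cat. Qed.

Lemma first_hit_nil (x : S) : first_hit T x (@nil (A * S)) = (x \in T).
Proof. by rewrite /first_hit /= andbT. Qed.

Lemma first_hit_cons (x : S) (p : A * S) w :
  first_hit T x (p :: w) = (x \notin T) && first_hit T p.2 w.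
Proof. by rewrite /first_hit /last_state /= andbCA. Qed.

End Paths.

Section Reachability.
Variables (R : realType) (S A : finType).
Variables (legal : S -> A -> bool) (P : S -> A -> S -> R) (T : {set S}).
Hypothesis hmdp : is_mdp legal P.

Definition hit_prob (sg : strat R S A) (x : S) (h : seq (A * S)) (r : nat) : R :=
  \sum_(w : r.-tuple (A * S) | first_hit T (last_state x h) w) pprob P sg x h w.

Definition reach (sg : strat R S A) (x : S) (h : seq (A * S)) : \bar R :=
  (\sum_(0 <= r <oo) (hit_prob sg x h r)%:E)%E.

Lemma pr_reachE (sg : strat R S A) x : pr_reach P T sg x = reach sg x [::].
Proof. by []. Qed.

Lemma step_ge0 (sg : strat R S A) x h a s : is_strategy legal sg ->
  0 <= sg x h a * P (last_state x h) a s.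
Proof.
move=> /(_ x h) [g0 _ gl]; have := g0 a; rewrite le0r => /orP [/eqP->|/gl lg].
  by rewrite mul0r.
by rewrite mulr_ge0 // (hmdp lg).1.
Qed.

Lemma step_sum1 (sg : strat R S A) x h : is_strategy legal sg ->
  \sum_(a : A) \sum_(s : S) sg x h a * P (last_state x h) a s = 1.
Proof.
move=> hs; have [g0 g1 gl] := hs x h.
rewrite -[RHS]g1; apply: eq_bigr => a _; rewrite -big_distrr /=.
have := g0 a; rewrite le0r => /orP [/eqP->|/gl lg]; first by rewrite mul0r.
by rewrite (hmdp lg).2 mulr1.
Qed.

Lemma pprob_ge0 (sg : strat R S A) x h w : is_strategy legal sg ->
  0 <= pprob P sg x h w.
Proof.
by move=> hs; elim: w h => [|[a s] w IH] h //=; rewrite mulr_ge0 // step_ge0.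
Qed.

Lemma hit_prob_ge0 sg x h r : is_strategy legal sg -> 0 <= hit_prob sg x h r.
Proof. by move=> hs; apply: sumr_ge0 => w _; apply: pprob_ge0. Qed.

Lemma hit_prob0 sg x h : hit_prob sg x h 0 = (last_state x h \in T)%:R.
Proof.
rewrite /hit_prob big_mkcond (eq_bigl (pred1 [tuple])) => [|w]; last first.
  by apply/esym/eqP; rewrite [w]tuple0.
by rewrite big_pred1_eq /= first_hit_nil; case: ifP.
Qed.

Lemma hit_probS sg x h r : hit_prob sg x h r.+1 =
  (last_state x h \notin T)%:R * \sum_(a : A) \sum_(s : S)
     (sg x h a * P (last_state x h) a s * hit_prob sg x (rcons h (a, s)) r).
Proof.
rewrite /hit_prob big_mkcond /= (@sum_tuple_cons _ _ r (fun w : seq (A * S) =>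
  if first_hit T (last_state x h) w then pprob P sg x h w else 0)).
rewrite [RHS]big_distrr /=; under [RHS]eq_bigr do rewrite big_distrr /=.
rewrite [RHS]pair_big /=; apply: eq_bigr => -[a s] _ /=.
rewrite mulrA big_distrr /= [RHS]big_mkcond /=; apply: eq_bigr => w _.
rewrite first_hit_cons last_state_rcons /=.
case: (last_state x h \in T) => /=; first by rewrite !mul0r; case: ifP.
by rewrite mul1r; case: ifP => _; rewrite ?mulr0.
Qed.

Lemma hit_prob_sum_le1 sg x : is_strategy legal sg ->
  forall N h, \sum_(r < N) hit_prob sg x h r <= 1.
Proof.
move=> hs; elim=> [|N IH] h; first by rewrite big_ord0.
rewrite big_ord_recl hit_prob0.
under eq_bigr do rewrite hit_probS.
rewrite -big_distrr /=.
have tail_le1 : \sum_(i < N) \sum_(a : A) \sum_(s : S)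
    sg x h a * P (last_state x h) a s * hit_prob sg x (rcons h (a, s)) i <= 1.
  rewrite exchange_big -(step_sum1 x h hs); apply: ler_sum => a _.
  rewrite exchange_big; apply: ler_sum => s _.
  by rewrite -big_distrr -[leRHS]mulr1 ler_wpM2l ?step_ge0.
by case: (last_state x h \in T); rewrite /= ?mul0r ?addr0 ?mul1r ?add0r.
Qed.

Local Open Scope ereal_scope.

Lemma reach_ge0 sg x h : is_strategy legal sg -> 0 <= reach sg x h.
Proof. by move=> hs; apply: nneseries_ge0 => n _ _; rewrite lee_fin hit_prob_ge0. Qed.

Lemma reach_le1 sg x h : is_strategy legal sg -> reach sg x h <= 1.
Proof.
move=> hs; apply: lime_le.
  by apply: is_cvg_nneseries => n _ _; rewrite lee_fin hit_prob_ge0.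
apply: nearW => n /=; rewrite sumEFin lee_fin big_mkord.
exact: hit_prob_sum_le1.
Qed.

Lemma reach_fin sg x h : is_strategy legal sg ->
  reach sg x h = (fine (reach sg x h))%:E.
Proof.
move=> hs; rewrite fineK // ge0_fin_numE ?reach_ge0 //.
by apply: le_lt_trans (reach_le1 x h hs) _; rewrite ltry.
Qed.

Lemma reach_T sg x h : last_state x h \in T -> reach sg x h = 1.
Proof.
move=> hT.
have hit_at0 k : hit_prob sg x h k = (k == 0)%N%:R.
  by case: k => [|k]; rewrite ?hit_prob0 ?hit_probS hT /= ?mul0r.
rewrite /reach nneseries_recl //; last by move=> k _; rewrite hit_at0 lee_fin ler0n.
by rewrite hit_at0 /= eseries0 ?adde0 // => -[|i] //= _ _; rewrite hit_at0.
Qed.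

Lemma reach_step sg x h : is_strategy legal sg -> last_state x h \notin T ->
  reach sg x h = \sum_(a : A) \sum_(s : S)
     (sg x h a * P (last_state x h) a s)%:E * reach sg x (rcons h (a, s)).
Proof.
move=> hs hT.
rewrite /reach nneseries_recl //; last by move=> k _; rewrite lee_fin hit_prob_ge0.
rewrite hit_prob0 (negbTE hT) add0e -nneseries_addn; last first.
  by move=> i; rewrite lee_fin hit_prob_ge0.
under eq_eseriesr do rewrite addn1 hit_probS hT mul1r -sumEFin.
rewrite nneseries_sum; last first.
  move=> a j _; rewrite lee_fin; apply: sumr_ge0 => s _.
  by rewrite mulr_ge0 ?step_ge0 ?hit_prob_ge0.
apply: eq_bigr => a _; under eq_eseriesr do rewrite -sumEFin.
rewrite nneseries_sum; last first.
  by move=> s j _; rewrite lee_fin mulr_ge0 ?step_ge0 ?hit_prob_ge0.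
apply: eq_bigr => s _; under eq_eseriesr do rewrite EFinM.
by rewrite nneseriesZl // => i _; rewrite lee_fin hit_prob_ge0.
Qed.

Lemma reach_shift (rho tau : strat R S A) x y h :
  (forall h', rho x (h ++ h') = tau y h') -> last_state x h = y ->
  reach rho x h = pr_reach P T tau y.
Proof.
move=> E L.
have pprob_shift w h' : pprob P rho x (h ++ h') w = pprob P tau y h' w.
  elim: w h' => [|[a s] w IH] h' //=.
  by rewrite E last_state_cat L rcons_cat IH.
rewrite pr_reachE /reach; apply: eq_eseriesr => r _; congr EFin.
rewrite /hit_prob L; apply: eq_bigr => w _.
by rewrite -[in LHS](cats0 h) pprob_shift.
Qed.

End Reachability.

Section Values.
Variables (R : realType) (S A : finType).
Variables (legal : S -> A -> bool) (P : S -> A -> S -> R) (T : {set S}).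
Hypothesis hmdp : is_mdp legal P.
(* Some strategy exists, so Val is a supremum over a nonempty set. *)
Variable tau0 : strat R S A.
Hypothesis htau0 : is_strategy legal tau0.

Local Notation Val := (Val legal P T).

Lemma pr_reach_le (sg : strat R S A) s : is_strategy legal sg ->
  (pr_reach P T sg s <= ValE legal P T s)%E.
Proof. by move=> hs; apply: ereal_sup_ubound; exists sg. Qed.

Lemma ValE_ge0 s : (0 <= ValE legal P T s)%E.
Proof.
apply: le_trans (pr_reach_le s htau0); rewrite pr_reachE.
exact: (reach_ge0 T hmdp _ _ htau0).
Qed.

Lemma ValE_le1 s : (ValE legal P T s <= 1)%E.
Proof.
apply/ereal_supP => y [sg hs <-]; rewrite pr_reachE.
exact: (reach_le1 T hmdp _ _ hs).
Qed.

Lemma ValE_fin s : ValE legal P T s = (Val s)%:E.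
Proof.
rewrite /Val fineK // ge0_fin_numE ?ValE_ge0 //.
by apply: le_lt_trans (ValE_le1 s) _; rewrite ltry.
Qed.

Lemma Val_ge0 s : 0 <= Val s.
Proof. by rewrite -lee_fin -ValE_fin ValE_ge0. Qed.

Lemma Val_le1 s : Val s <= 1.
Proof. by rewrite -lee_fin -ValE_fin ValE_le1. Qed.

Lemma Val_T t : t \in T -> Val t = 1.
Proof.
move=> tT; apply/eqP; rewrite eq_le Val_le1 /= -lee_fin -ValE_fin.
by have := pr_reach_le t htau0; rewrite pr_reachE reach_T.
Qed.

Lemma near_optimal s e : 0 < e ->
  exists tau, is_strategy legal tau /\ ((Val s - e)%:E < pr_reach P T tau s)%E.
Proof.
move=> e0; have fn : ValE legal P T s \is a fin_num by rewrite ValE_fin.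
have [y [tau ht <-] hy] := ub_ereal_sup_adherent e0 fn.
by exists tau; split => //; rewrite EFinB -ValE_fin.
Qed.

Definition deviate (s : S) (a : A) (f : S -> strat R S A) : strat R S A :=
  fun x h b => if x == s then
    (match h with [::] => (b == a)%:R | (_, s1) :: h' => f s1 s1 h' b end)
  else tau0 x h b.

Lemma deviate_strategy s a f : legal s a ->
  (forall s', is_strategy legal (f s')) -> is_strategy legal (deviate s a f).
Proof.
move=> la hf x h; rewrite /deviate; case: eqP => [->|_]; last exact: htau0.
case: h => [|[b0 s1] h']; last by have [g0 g1 gl] := hf s1 s1 h'.
split => [b||b]; first by rewrite ler0n.
  by rewrite (bigD1 a) //= eqxx big1 ?addr0 // => b /negbTE ->.
by case: eqP => [-> //|_]; rewrite ltxx.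
Qed.

Lemma reach_deviate s a f : s \notin T ->
  (forall s', is_strategy legal (f s')) -> legal s a ->
  pr_reach P T (deviate s a f) s =
  (\sum_(s' : S) (P s a s')%:E * pr_reach P T (f s') s')%E.
Proof.
move=> sT hf la; rewrite pr_reachE (reach_step hmdp (deviate_strategy la hf)) //.
rewrite (bigD1 a) //= [X in (_ + X)%E]big1 ?adde0; last first.
  move=> b nba; apply: big1 => s' _.
  by rewrite /deviate eqxx (negbTE nba) mul0r mul0e.
apply: eq_bigr => s' _; rewrite /= (reach_shift P T (tau := f s') (y := s')) //.
  by rewrite /deviate !eqxx mul1r.
by move=> h'; rewrite /deviate eqxx.
Qed.

Lemma bellman s a : legal s a -> \sum_(s' : S) P s a s' * Val s' <= Val s.
Proof.
move=> la; have [P0 P1] := hmdp la.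
have avg_sub e : \sum_(s' : S) P s a s' * (Val s' - e) =
                 \sum_(s' : S) P s a s' * Val s' - e.
  by under eq_bigr do rewrite mulrBr; rewrite sumrB -big_distrl /= P1 mul1r.
case: (boolP (s \in T)) => sT.
  rewrite Val_T //; apply: le_trans (_ : \sum_(s' : S) P s a s' * 1 <= 1).
    by apply: ler_sum => s' _; rewrite ler_wpM2l ?Val_le1.
  by under eq_bigr do rewrite mulr1; rewrite P1.
apply/ler_addgt0Pr => e e0.
have [f hf] := choice (fun s' => near_optimal s' e0).
have approx : ((\sum_(s' : S) P s a s' * Val s' - e)%:E <= (Val s)%:E)%E.
  rewrite -ValE_fin -avg_sub.
  apply: le_trans (pr_reach_le s (deviate_strategy la (fun s' => (hf s').1))).
  rewrite reach_deviate //; last by move=> s'; exact: (hf s').1.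
  rewrite -sumEFin.
  apply: lee_sum => s' _; rewrite EFinM lee_wpmul2l ?lee_fin //.
  exact: ltW (hf s').2.
by move: approx; rewrite lee_fin lerBlDr.
Qed.

Section Optimal.
Variables (sigma : strat R S A) (s0 : S).
Hypothesis hsig : is_strategy legal sigma.

Definition tight (h : seq (A * S)) : Prop :=
  reach P T sigma s0 h = (Val (last_state s0 h))%:E.

Lemma reach_le_Val h : (reach P T sigma s0 h <= (Val (last_state s0 h))%:E)%E.
Proof.
pose sh : strat R S A := fun x h' =>
  if x == last_state s0 h then sigma s0 (h ++ h') else tau0 x h'.
have hsh : is_strategy legal sh.
  move=> x h'; rewrite /sh; case: eqP => [->|_]; last exact: htau0.
  by have [g0 g1 gl] := hsig s0 (h ++ h'); split => // b /gl; rewrite last_state_cat.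
rewrite (reach_shift P T (rho := sigma) (tau := sh) (y := last_state s0 h) (h := h)) //.
  by rewrite -ValE_fin pr_reach_le.
by move=> h'; rewrite /sh eqxx.
Qed.

(* After a tight history outside T, every action played with positive
   probability is optimal and every positive-probability successor is
   tight: the chain Val x = sum c * reach <= sum c * Val <= Val x must
   be an equality term by term. *)
Lemma tight_step h a s' : tight h -> last_state s0 h \notin T ->
  0 < sigma s0 h a -> 0 < P (last_state s0 h) a s' ->
  Opt legal P T (last_state s0 h) a /\ tight (rcons h (a, s')).
Proof.
move=> hI hT sa0 Pa0; have [g0 g1 gl] := hsig s0 h.
set x := last_state s0 h in hI hT Pa0 gl *.
pose c b t := sigma s0 h b * P x b t.
pose vr b t := fine (reach P T sigma s0 (rcons h (b, t))).
pose F b := \sum_(t : S) c b t * vr b t.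
pose G b := \sum_(t : S) c b t * Val t.
pose H b := sigma s0 h b * Val x.
have c0 b t : 0 <= c b t by exact: (step_ge0 hmdp _ _ _ _ hsig).
have vr_le b t : vr b t <= Val t.
  rewrite -lee_fin /vr -(reach_fin T hmdp) //.
  by have := reach_le_Val (rcons h (b, t)); rewrite last_state_rcons.
have FG b : F b <= G b by apply: ler_sum => t _; rewrite ler_wpM2l.
have GE b : G b = sigma s0 h b * \sum_(t : S) P x b t * Val t.
  by rewrite big_distrr /=; apply: eq_bigr => t _; rewrite mulrA.
have GH b : G b <= H b.
  rewrite GE /H; have := g0 b; rewrite le0r => /orP [/eqP->|hb].
    by rewrite !mul0r.
  by apply: ler_wpM2l; [exact: ltW | exact: bellman (gl _ hb)].
have sumF : \sum_b F b = Val x.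
  apply: EFin_inj; rewrite -hI (reach_step hmdp) // -sumEFin; apply: eq_bigr => b _.
  rewrite /F -sumEFin; apply: eq_bigr => t _.
  by rewrite EFinM /vr -(reach_fin T hmdp).
have sumH : \sum_b H b = Val x by rewrite -big_distrl /= g1 mul1r.
have sumFG : \sum_b F b = \sum_b G b.
  apply/le_anti; rewrite ler_sum //= sumF -[leRHS]sumH.
  by apply: ler_sum => b _.
have sumGH : \sum_b G b = \sum_b H b.
  by apply/le_anti; rewrite ler_sum //= sumH -sumF sumFG.
split.
  split; first exact: gl.
  have := sum_le_eq GH sumGH a; rewrite GE /H.
  by move/(mulfI (lt0r_neq0 sa0)).
have ca0 : 0 < c a s' by rewrite mulr_gt0.
have termwise t : c a t * vr a t <= c a t * Val t by rewrite ler_wpM2l.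
have := sum_le_eq termwise (sum_le_eq FG sumFG a) s'.
move/(mulfI (lt0r_neq0 ca0)) => hv.
by rewrite /tight last_state_rcons (reach_fin T hmdp) // -/(vr a s') hv.
Qed.

Lemma pruned_pprob w h : tight h -> first_hit T (last_state s0 h) w ->
  pprob (P' legal P T) sigma s0 h w * Val (last_state s0 h) =
  pprob P sigma s0 h w.
Proof.
elim: w h => [|[a s'] w IH] h hI.
  by rewrite first_hit_nil => hT /=; rewrite Val_T // mul1r.
rewrite first_hit_cons /= => /andP [hT hf].
have [g0 _ gl] := hsig s0 h.
set x := last_state s0 h in hI hT hf gl *.
have := g0 a; rewrite le0r => /orP [/eqP sa0|sa]; first by rewrite sa0 !mul0r.
have lg := gl a sa; have := (hmdp lg).1 s'.
rewrite le0r => /orP [/eqP Pa0|Pa].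
  by rewrite /P'; case: ifP => _; rewrite Pa0 ?mul0r ?mulr0 ?mul0r.
have [hO hI'] := tight_step hI hT sa Pa.
have := IH _ hI'; rewrite last_state_rcons => /(_ hf) <-.
(* If Val x = 0, optimality of a forces Val s' = 0 and both sides vanish. *)
have := Val_ge0 x; rewrite le0r => /orP [/eqP Vx0|Vx].
  have : P x a s' * Val s' = 0.
    have := hO.2; rewrite Vx0 => /esym/psumr_eq0P; apply => // t _.
    by rewrite mulr_ge0 ?Val_ge0 // (hmdp lg).1.
  by move/eqP; rewrite mulf_eq0 gt_eqF //= => /eqP ->; rewrite Vx0 !mulr0.
have -> : P' legal P T x a s' = P x a s' * Val s' / Val x.
  by rewrite /P' /legal' Vx /=; case: asboolP.
by field; exact: lt0r_neq0.
Qed.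

Hypothesis hopt : pr_reach P T sigma s0 = ValE legal P T s0.
Hypothesis hs0 : 0 < Val s0.

Lemma pr_len_pruned r :
  pr_len (P' legal P T) T sigma s0 r = pr_len P T sigma s0 r / Val s0.
Proof.
have tight0 : tight [::] by rewrite /tight -pr_reachE hopt ValE_fin.
apply: (mulIf (lt0r_neq0 hs0)); rewrite divfK ?(lt0r_neq0 hs0) //.
rewrite /pr_len big_distrl; apply: eq_bigr => w hw.
exact: pruned_pprob tight0 hw.
Qed.

Lemma pruned_series (g : nat -> R) : (forall r, 0 <= g r) ->
  (\sum_(0 <= r <oo) (g r * pr_len (P' legal P T) T sigma s0 r)%:E =
   (Val s0)^-1%:E * \sum_(0 <= r <oo) (g r * pr_len P T sigma s0 r)%:E)%E.
Proof.
move=> g0; under eq_eseriesr do rewrite pr_len_pruned mulrA (mulrC _ (Val s0)^-1) EFinM.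
apply: nneseriesZl => r _.
by rewrite lee_fin mulr_ge0 // (hit_prob_ge0 T hmdp s0 [::] r hsig).
Qed.

Lemma pruned_reach : pr_reach (P' legal P T) T sigma s0 = 1%E.
Proof.
have := pruned_series (fun=> ler01).
under eq_eseriesr do rewrite mul1r.
under [X in _ = (_ * X)%E -> _]eq_eseriesr do rewrite mul1r.
rewrite /pr_reach => ->; rewrite -/(pr_reach P T sigma s0) hopt ValE_fin.
by rewrite -EFinM mulVf // lt0r_neq0.
Qed.

End Optimal.
End Values.

Theorem lemma5 (R : realType) (S A : finType)
  (legal : S -> A -> bool) (P : S -> A -> S -> R) (T : {set S})
  (hmdp : is_mdp legal P)
  (hsink : forall t a, t \in T -> legal t a -> P t a t = 1)
  (s0 : S) (hs0 : 0 < Val legal P T s0)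
  (sigma : strat R S A) (hsigma : optimal legal P T sigma s0) :
  exp_len' legal P T sigma s0 = exp_len_cond P T sigma s0.
Proof.
(* sigma itself witnesses that strategies exist. *)
have [hs hopt] := hsigma.
rewrite /exp_len' /exp_len_cond (pruned_reach hmdp hs hs hopt hs0) ltxx adde0.
rewrite (pruned_series hmdp hs hs hopt hs0 (fun r => ler0n _ r)).
by rewrite hopt (ValE_fin T hmdp hs) /= muleC.
Qed.
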